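(* Let $(X,p)$ be an allocation with prices satisfying: $p(e)=k$ for every $e\in M^+$ and $p(e)=1$ for every $e\in M^-$; $(X,p)$ is an equilibrium with $\alpha_i=1$ for all $i\in N$; and for every MBB path $i_0\to\cdots\to i_s$ ($s\ge1$) and every $e\in X_{i_s}$, $\frac{v_{i_s}(X_{i_s}\setminus\{e\})}{w_{i_s}}\le\frac{v_{i_0}(X_{i_0})}{w_{i_0}}$. Define agent groups as follows: set $N'=N$, $R=0$; while $N'\neq\emptyset$, let $\ell\in\arg\min_{i\in N'}v_i(X_i)/w_i$ (smallest index on ties), increase $R$ by $1$, let $N_R$ be the set of agents of $N'$ reachable from $\ell$ by a directed path in the MBB graph (including $\ell$), and set $N'\leftarrow N'\setminus N_R$. Then: (1) for all $i\in N_r$, $j\in N_{r'}$ with $r<r'$, we have $v_i(e)=1$ for every $e\in X_j$; (2) $M^-\subseteq\bigcup_{i\in N_1}X_i$; (3) for every $r$, the group $N_r$ is WEQX: for all $i,j\in N_r$ and $e\in X_j$, $\frac{v_i(X_i)}{w_i}\ge\frac{v_j(X_j\setminus\{e\})}{w_j}$.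
   Context: Bivalued instance: agents $N$, goods $M$, additive valuations with $v_i(e)\in\{1,k\}$, $k>1$, weights $w_i>0$ summing to $1$. $M^-=\{e\in M:v_i(e)=1\ \forall i\in N\}$ and $M^+=M\setminus M^-$. Prices $p(e)>0$; $\alpha_{i,e}=v_i(e)/p(e)$, $\alpha_i=\max_e\alpha_{i,e}$, $\mathrm{MBB}_i=\{e:\alpha_{i,e}=\alpha_i\}$; $(X,p)$ is an equilibrium if $X_i\subseteq\mathrm{MBB}_i$ for all $i$. The MBB graph is the directed graph on $N$ with edge $i\to j$ iff $\mathrm{MBB}_i\cap X_j\ne\emptyset$. *)

From HB Require Import structures.
From mathcomp Require Import all_boot all_order all_algebra.
Set Implicit Arguments. Unset Strict Implicit. Unset Printing Implicit Defensive.
Import Order.TTheory GRing.Theory Num.Theory.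
Local Open Scope ring_scope.

(* Agents are 'I_n (ordered, for the "smallest index" tie-break), goods are a
   finType M. A (complete) allocation is given by an owner map own : M -> 'I_n,
   X_i = bundle own i. *)
Section Market.
Variables (R : realFieldType) (n : nat) (M : finType).
Variables (v : 'I_n -> M -> R) (w : 'I_n -> R) (own : M -> 'I_n) (p : M -> R).

Definition bundle (i : 'I_n) : {set M} := [set e | own e == i].

Definition valS (i : 'I_n) (S : {set M}) : R := \sum_(e in S) v i e.

Definition Mminus : {set M} := [set e | [forall i, v i e == 1]].
Definition Mplus : {set M} := ~: Mminus.

Definition alpha_ie (i : 'I_n) (e : M) : R := v i e / p e.
Definition alpha (i : 'I_n) : R := \big[Num.max/0]_(e : M) alpha_ie i e.
Definition MBB (i : 'I_n) : {set M} := [set e | alpha_ie i e == alpha i].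

Definition is_equilibrium : Prop := forall i, bundle i \subset MBB i.

Definition mbb_edge : rel 'I_n :=
  fun i j => [exists e, (e \in MBB i) && (e \in bundle j)].

Definition ratio (i : 'I_n) : R := valS i (bundle i) / w i.

Definition leaderb (Np : {set 'I_n}) (l : 'I_n) : bool :=
  [&& l \in Np,
      [forall j in Np, ratio l <= ratio j] &
      [forall j in Np, (ratio j <= ratio l) ==> (l <= j)%N]].

(* The grouping procedure; the fuel n is enough since every round removes
   at least the leader. *)
Fixpoint groups_aux (fuel : nat) (Np : {set 'I_n}) : seq {set 'I_n} :=
  match fuel with
  | 0 => [::]
  | f.+1 =>
      match [pick l | leaderb Np l] with
      | Some l =>
          let G := [set j in Np | connect mbb_edge l j] in
          G :: groups_aux f (Np :\: G)
      | None => [::]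
      end
  end.

(* groups = [:: N_1; N_2; ...; N_R] (0-based list index r-1 for N_r) *)
Definition groups : seq {set 'I_n} := groups_aux n [set: 'I_n].

End Market.

From Pilot Require Import Defs.
From HB Require Import structures.
From mathcomp Require Import all_boot all_order all_algebra.
Import Order.TTheory GRing.Theory Num.Theory.
Local Open Scope ring_scope.

(* Each group N_r is the MBB-closure of its leader inside the agents still
   present, and every later group is carved out of the rest; hence no MBB edge
   leaves an earlier group towards a later one. In the bivalued instance with
   alpha_i = 1, a good worth k to agent i is an MBB good of i, and a good of
   M^- is an MBB good of everybody: this gives (1), and (2) because the first
   leader reaches every agent holding a good of M^-. For (3), the leader l of
   N_r has the least ratio in N_r and reaches every j in N_r: the path
   condition bounds v_j(X_j \ e)/w_j by ratio l, and so does removing a good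
   when j = l. *)

Section Grouping.
Variables (R : realFieldType) (n : nat) (M : finType).
Variables (v : 'I_n -> M -> R) (w : 'I_n -> R) (own : M -> 'I_n) (p : M -> R).

Local Notation edge := (mbb_edge v own p).
Local Notation ratio := (Defs.ratio v w own).
Local Notation leader := (leaderb v w own).
Local Notation groups_from := (groups_aux v w own p).
Local Notation G := (groups v w own p).

Lemma leader_exists (Np : {set 'I_n}) x0 : x0 \in Np -> exists l, leader Np l.
Proof.
move=> Np_x0.
have [m Np_m min_m] := arg_minP ratio Np_x0; have {}Np_m : m \in Np by [].
pose S j := (j \in Np) && (ratio j <= ratio m).
have S_m : S m by rewrite /S Np_m lexx.
have [l /andP[Np_l lm] min_l] := arg_minnP (fun j : 'I_n => nat_of_ord j) S_m.
exists l; apply/and3P; split => //.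
- by apply/forall_inP => j Np_j; exact: le_trans lm (min_m j Np_j).
- apply/forall_inP => j Np_j; apply/implyP => jl.
  by apply: min_l; rewrite /S Np_j (le_trans jl lm).
Qed.

Lemma groups_aux_sub fuel Np r : nth set0 (groups_from fuel Np) r \subset Np.
Proof.
elim: fuel Np r => [|f IH] Np r /=; first by rewrite nth_nil sub0set.
case: pickP => [l _|_]; last by rewrite nth_nil sub0set.
case: r => [|r] /=; first by apply/subsetP => j; rewrite inE => /andP[].
exact: subset_trans (IH _ r) (subsetDl _ _).
Qed.

Lemma groups_auxP fuel Np r : (r < size (groups_from fuel Np))%N ->
  exists Np' l, [/\ leader Np' l,
    nth set0 (groups_from fuel Np) r = [set j in Np' | connect edge l j] &
    forall r', (r < r')%N ->
      nth set0 (groups_from fuel Np) r' \subset Np' :\: nth set0 (groups_from fuel Np) r].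
Proof.
elim: fuel Np r => [|f IH] Np r //=.
case: pickP => [l lead_l|_] //=.
case: r => [_ |r] /=.
  by exists Np, l; split => // -[|r'] //= _; exact: groups_aux_sub.
rewrite ltnS => /IH [Np' [l' [lead_l' Gr later]]].
by exists Np', l'; split => // -[|r'] //; exact: later.
Qed.

Lemma no_edge_to_later_group r r' i j :
  (r < r')%N -> (r' < size G)%N -> i \in nth set0 G r -> j \in nth set0 G r' ->
  ~~ edge i j.
Proof.
move=> lt_rr' lt_r'G Gi Gj; apply/negP => ij.
have [Np' [l [_ Gr later]]] := groups_auxP _ _ _ (ltn_trans lt_rr' lt_r'G).
have := subsetP (later r' lt_rr') j Gj; rewrite inE => /andP[/negP not_Gr_j Np'_j].
apply: not_Gr_j; move: Gi; rewrite Gr !inE => /andP[_ li].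
by rewrite Np'_j (connect_trans li (connect1 ij)).
Qed.

Lemma groups_aux_head fuel (Np : {set 'I_n}) (x0 : 'I_n) : (0 < fuel)%N -> x0 \in Np ->
  exists l, nth set0 (groups_from fuel Np) 0 = [set j in Np | connect edge l j].
Proof.
case: fuel => [|f] //= _ Np_x0.
case: pickP => [l _|no_leader]; first by exists l.
by have [l] := leader_exists _ _ Np_x0; rewrite no_leader.
Qed.

Lemma group_leader r : (r < size G)%N ->
  exists l, forall j, j \in nth set0 G r ->
    ratio l <= ratio j /\ connect edge l j.
Proof.
move=> /(groups_auxP _ _ _) [Np' [l [/and3P[_ /forall_inP min_l _] Gr _]]].
by exists l => j; rewrite Gr inE => /andP[Np'_j lj]; split; [exact: min_l|].
Qed.

End Grouping.

Arguments groups_aux_head {R n M} v w own p {fuel Np x0}.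
Arguments no_edge_to_later_group {R n M v w own p r r' i j}.
Arguments group_leader {R n M v w own p r}.

Section BivaluedEquilibrium.
Variables (R : realFieldType) (n : nat) (M : finType).
Variables (k : R) (v : 'I_n -> M -> R) (w : 'I_n -> R).
Variables (own : M -> 'I_n) (p : M -> R).

Local Notation edge := (mbb_edge v own p).
Local Notation G := (groups v w own p).

Hypothesis k_gt1 : 1 < k.
Hypothesis bivalued : forall i e, v i e = 1 \/ v i e = k.
Hypothesis w_gt0 : forall i, 0 < w i.
Hypothesis price_Mplus : forall e, e \in Mplus v -> p e = k.
Hypothesis price_Mminus : forall e, e \in Mminus v -> p e = 1.
Hypothesis alpha1 : forall i, alpha v p i = 1.
Hypothesis path_bound : forall (i0 : 'I_n) (s : seq 'I_n), s != [::] ->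
  path edge i0 s ->
  forall e, e \in bundle own (last i0 s) ->
    valS v (last i0 s) (bundle own (last i0 s) :\ e) / w (last i0 s)
    <= valS v i0 (bundle own i0) / w i0.

Lemma value_ge0 i e : 0 <= v i e.
Proof. by case: (bivalued i e) => ->; [exact: ler01 | exact: ltW (lt_trans ltr01 k_gt1)]. Qed.

Lemma price_neq0 e : p e != 0.
Proof.
have [Mm_e | Mp_e] := boolP (e \in Mminus v); first by rewrite price_Mminus ?oner_neq0.
rewrite price_Mplus; last by rewrite inE Mp_e.
by rewrite gt_eqF // (lt_trans ltr01 k_gt1).
Qed.

Lemma edge_to_owner i e : v i e = p e -> edge i (own e).
Proof.
move=> vp; apply/existsP; exists e; rewrite /bundle !inE eqxx andbT.
by rewrite /alpha_ie alpha1 vp divff ?price_neq0.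
Qed.

Lemma edge_to_owner_of_high_value i e : v i e = k -> edge i (own e).
Proof.
move=> vk; apply: edge_to_owner; rewrite vk price_Mplus // in_setC inE.
apply/forallP => /(_ i)/eqP; rewrite vk => k1.
by move: k_gt1; rewrite k1 ltxx.
Qed.

Lemma later_groups_valued_one r r' : (r < r')%N -> (r' < size G)%N ->
  forall i j, i \in nth set0 G r -> j \in nth set0 G r' ->
  forall e, e \in bundle own j -> v i e = 1.
Proof.
move=> lt_rr' lt_r'G i j Gi Gj e; rewrite inE => /eqP own_e.
case: (bivalued i e) => // /edge_to_owner_of_high_value.
rewrite own_e => ij.
by have := no_edge_to_later_group lt_rr' lt_r'G Gi Gj; rewrite ij.
Qed.

Lemma Mminus_sub_first_group : Mminus v \subset \bigcup_(i in nth set0 G 0) bundle own i.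
Proof.
apply/subsetP => e Mm_e; have n_gt0 := leq_ltn_trans (leq0n _) (ltn_ord (own e)).
have [l G0] := groups_aux_head v w own p n_gt0 (in_setT (own e)).
apply/bigcupP; exists (own e); last by rewrite inE.
rewrite G0 !inE; apply/connect1/edge_to_owner; rewrite price_Mminus //.
by move: Mm_e; rewrite inE => /forallP/(_ l)/eqP.
Qed.

Lemma group_weqx r : (r < size G)%N ->
  forall i j, i \in nth set0 G r -> j \in nth set0 G r ->
  forall e, e \in bundle own j ->
  valS v j (bundle own j :\ e) / w j <= valS v i (bundle own i) / w i.
Proof.
move=> /group_leader[l lead] i j Gi Gj e Xj_e.
have [li _] := lead i Gi; have [_ /connectP[s ls j_last]] := lead j Gj.
apply: le_trans li; subst j.
case: s ls Gj Xj_e => [|a s] ls _ Xl_e; last exact: path_bound.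
rewrite ler_pM2r ?invr_gt0 // /valS (big_setD1 _ Xl_e) /= lerDr.
exact: value_ge0.
Qed.

End BivaluedEquilibrium.

Theorem lemma4p2 (R : realFieldType) (n : nat) (M : finType)
  (k : R) (v : 'I_n -> M -> R) (w : 'I_n -> R)
  (own : M -> 'I_n) (p : M -> R) :
  1 < k ->
  (forall i e, v i e = 1 \/ v i e = k) ->
  (forall i, 0 < w i) ->
  \sum_(i < n) w i = 1 ->
  (forall e, e \in Mplus v -> p e = k) ->
  (forall e, e \in Mminus v -> p e = 1) ->
  is_equilibrium v own p ->
  (forall i, alpha v p i = 1) ->
  (forall (i0 : 'I_n) (s : seq 'I_n), s != [::] ->
     path (mbb_edge v own p) i0 s ->
     forall e, e \in bundle own (last i0 s) ->
       valS v (last i0 s) (bundle own (last i0 s) :\ e) / w (last i0 s)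
       <= valS v i0 (bundle own i0) / w i0) ->
  let G := groups v w own p in
  (* (1) *)
  (forall (r r' : nat), (r < r')%N -> (r' < size G)%N ->
     forall i j, i \in nth set0 G r -> j \in nth set0 G r' ->
     forall e, e \in bundle own j -> v i e = 1) /\
  (* (2) *)
  (Mminus v \subset \bigcup_(i in nth set0 G 0) bundle own i) /\
  (* (3) *)
  (forall (r : nat), (r < size G)%N ->
     forall i j, i \in nth set0 G r -> j \in nth set0 G r ->
     forall e, e \in bundle own j ->
       valS v j (bundle own j :\ e) / w j <= valS v i (bundle own i) / w i).
Proof.
move=> k_gt1 bival w_gt0 _ pMp pMm _ alpha1 path_bound G; split; [|split].
- exact: later_groups_valued_one k_gt1 bival pMp pMm alpha1.
- exact: Mminus_sub_first_group k_gt1 pMp pMm alpha1.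
- exact: group_weqx k_gt1 bival w_gt0 path_bound.
Qed.
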